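(* Let $s$ be a term such that $s\succ^k t$ for some abstraction $t$. Then $\tau_s\succ^{3k+1}([],[P])$ in the substitution machine for some program $P$ with $P\gg t$.
   Context: Terms (de Bruijn): $s::=n\mid st\mid\lambda s$. Term substitution: $k^k_u=u$, $n^k_u=n$ ($n\ne k$), $(st)^k_u=(s^k_u)(t^k_u)$, $(\lambda s)^k_u=\lambda(s^{k+1}_u)$. Reduction $\succ$: $(\lambda s)(\lambda t)\succ s^0_{\lambda t}$; $s\succ s'\Rightarrow st\succ s't$; $t\succ t'\Rightarrow(\lambda s)t\succ(\lambda s)t'$; $\succ^k$ is $k$-fold reduction. Programs are lists of commands $\mathsf{ret},\mathsf{var}\,n,\mathsf{lam},\mathsf{app}$. Compilation: $\gamma n=[\mathsf{var}\,n]$, $\gamma(st)=\gamma s++\gamma t++[\mathsf{app}]$, $\gamma(\lambda s)=\mathsf{lam}::\gamma s++[\mathsf{ret}]$. $P\gg s$ holds iff $P=\gamma u$ and $s=\lambda u$ for some $u$. $\varphi P:=\varphi_{0,[]}P$ with $\varphi_{0,Q}(\mathsf{ret}::P)=(Q,P)$, $\varphi_{k+1,Q}(\mathsf{ret}::P)=\varphi_{k,Q++[\mathsf{ret}]}P$, $\varphi_{k,Q}(\mathsf{lam}::P)=\varphi_{k+1,Q++[\mathsf{lam}]}P$, $\varphi_{k,Q}(c::P)=\varphi_{k,Q++[c]}P$ for $c$ a $\mathsf{var}$ or $\mathsf{app}$, undefined otherwise. Program substitution: $(\mathsf{var}\,k::P)^k_Q=Q++P^k_Q$; $(\mathsf{var}\,n::P)^k_Q=\mathsf{var}\,n::P^k_Q$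 ($n\ne k$); $(\mathsf{lam}::P)^k_Q=\mathsf{lam}::P^{k+1}_Q$; $(\mathsf{app}::P)^k_Q=\mathsf{app}::P^k_Q$; $(\mathsf{ret}::P)^0_Q=[\mathsf{ret}]$; $(\mathsf{ret}::P)^{k+1}_Q=\mathsf{ret}::P^k_Q$; $[]^k_Q=[]$. The substitution machine has states $(T,V)$ with $T,V$ lists of programs, and steps: $((\mathsf{lam}::P)::T,V)\succ(P'::_{tc}T,\ Q::V)$ if $\varphi P=(Q,P')$; $((\mathsf{app}::P)::T,\ Q::R::V)\succ(R^0_{\mathsf{lam}::Q++[\mathsf{ret}]}::(P::_{tc}T),\ V)$; where $P::_{tc}T:=T$ if $P=[]$ and $P::T$ otherwise. The initial state is $\tau_s:=([\gamma s],[])$. *)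

From Stdlib Require Import List Arith.
Import ListNotations.

Inductive term : Type :=
| tvar : nat -> term
| tapp : term -> term -> term
| tlam : term -> term.

Fixpoint subst (s : term) (k : nat) (u : term) : term :=
  match s with
  | tvar n => if Nat.eqb n k then u else tvar n
  | tapp s1 s2 => tapp (subst s1 k u) (subst s2 k u)
  | tlam s1 => tlam (subst s1 (S k) u)
  end.

Inductive red : term -> term -> Prop :=
| red_beta : forall s t, red (tapp (tlam s) (tlam t)) (subst s 0 (tlam t))
| red_appL : forall s s' t, red s s' -> red (tapp s t) (tapp s' t)
| red_appR : forall s t t', red t t' -> red (tapp (tlam s) t) (tapp (tlam s) t').

Inductive pow {A : Type} (R : A -> A -> Prop) : nat -> A -> A -> Prop :=
| pow_O : forall x, pow R 0 x x
| pow_S : forall n x y z, R x y -> pow R n y z -> pow R (S n) x z.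

Inductive com : Type :=
| cret : com
| cvar : nat -> com
| clam : com
| capp : com.

Definition prog := list com.

Fixpoint gamma (s : term) : prog :=
  match s with
  | tvar n => [cvar n]
  | tapp s t => gamma s ++ gamma t ++ [capp]
  | tlam s => clam :: gamma s ++ [cret]
  end.

Definition represents (P : prog) (s : term) : Prop :=
  exists u, P = gamma u /\ s = tlam u.

Fixpoint phi_aux (k : nat) (Q : prog) (P : prog) : option (prog * prog) :=
  match P with
  | [] => None
  | cret :: P' =>
      match k with
      | 0 => Some (Q, P')
      | S k' => phi_aux k' (Q ++ [cret]) P'
      end
  | clam :: P' => phi_aux (S k) (Q ++ [clam]) P'
  | c :: P' => phi_aux k (Q ++ [c]) P'
  end.

Definition phi (P : prog) : option (prog * prog) := phi_aux 0 [] P.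

Fixpoint psubst (P : prog) (k : nat) (Q : prog) : prog :=
  match P with
  | [] => []
  | cvar n :: P' => if Nat.eqb n k then Q ++ psubst P' k Q else cvar n :: psubst P' k Q
  | clam :: P' => clam :: psubst P' (S k) Q
  | capp :: P' => capp :: psubst P' k Q
  | cret :: P' =>
      match k with
      | 0 => [cret]
      | S k' => cret :: psubst P' k' Q
      end
  end.

Definition tc (P : prog) (T : list prog) : list prog :=
  match P with
  | [] => T
  | _ => P :: T
  end.

Definition state := (list prog * list prog)%type.

Inductive mstep : state -> state -> Prop :=
| mstep_lam : forall P T V Q P',
    phi P = Some (Q, P') ->
    mstep ((clam :: P) :: T, V) (tc P' T, Q :: V)
| mstep_app : forall P T Q R V,
    mstep ((capp :: P) :: T, Q :: R :: V)
          (psubst R 0 (clam :: Q ++ [cret]) :: tc P T, V).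

Definition tau (s : term) : state := ([gamma s], []).

(** A reduction sequence of [s] to an abstraction has big-step shape: for
    [s = s1 s2] it evaluates [s1] to [λa], then [s2] to [λb], performs the
    β-step and evaluates [a[λb]].  The machine follows the same shape on the
    compiled term: a value costs one [lam] step, and an application costs the
    machine runs of its three subevaluations plus one [app] step, which
    substitutes on the program level exactly as [subst] does on terms.  With
    [k = k1 + k2 + k3 + 1] this gives [(3k1+1) + (3k2+1) + 1 + (3k3+1) = 3k+1]. *)

From Stdlib Require Import List Lia.
Import ListNotations.

Lemma pow_add {A : Type} (R : A -> A -> Prop) m n x y z :
  pow R m x y -> pow R n y z -> pow R (m + n) x z.
Proof.
  induction 1; intros; simpl; auto.
  econstructor; eauto.
Qed.

Lemma pow_one {A : Type} (R : A -> A -> Prop) x y : R x y -> pow R 1 x y.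
Proof. intro H. econstructor; [exact H | constructor]. Qed.

(* [eval k s u]: [s] reduces in [k] steps to the abstraction [tlam u]. *)
Inductive eval : nat -> term -> term -> Prop :=
| eval_lam : forall a, eval 0 (tlam a) a
| eval_app : forall k1 k2 k3 s1 s2 a b u,
    eval k1 s1 a -> eval k2 s2 b -> eval k3 (subst a 0 (tlam b)) u ->
    eval (k1 + k2 + S k3) (tapp s1 s2) u.

Lemma eval_red_expand s s' : red s s' ->
  forall k u, eval k s' u -> eval (S k) s u.
Proof.
  induction 1 as [a b | s1 s1' s2 _ IH | a s2 s2' _ IH]; intros k u Hev.
  - exact (eval_app 0 0 k _ _ a b u (eval_lam a) (eval_lam b) Hev).
  - inversion Hev as [| k1 k2 k3 ? ? a b ? H1 H2 H3]; subst.
    exact (eval_app (S k1) k2 k3 _ _ a b u (IH _ _ H1) H2 H3).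
  - inversion Hev as [| k1 k2 k3 ? ? a' b ? H1 H2 H3]; subst.
    inversion H1; subst.
    exact (eval_app 0 (S k2) k3 _ _ a' b u (eval_lam a') (IH _ _ H2) H3).
Qed.

Lemma pow_red_lam_eval k s u : pow red k s (tlam u) -> eval k s u.
Proof.
  remember (tlam u) as t eqn:Et.
  induction 1; subst.
  - constructor.
  - eapply eval_red_expand; eauto.
Qed.

Lemma gamma_neq_nil s : gamma s <> [].
Proof.
  induction s as [? | s1 IH1 s2 _ | ? _]; simpl; try discriminate.
  intro E; apply app_eq_nil in E as [E _]; exact (IH1 E).
Qed.

Lemma tc_gamma_app s P T : tc (gamma s ++ P) T = (gamma s ++ P) :: T.
Proof.
  destruct (gamma s) eqn:E; [now destruct (gamma_neq_nil s) | reflexivity].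
Qed.

Lemma psubst_gamma_app s k u P :
  psubst (gamma s ++ P) k (gamma u) = gamma (subst s k u) ++ psubst P k (gamma u).
Proof.
  revert k P; induction s as [n | s1 IH1 s2 IH2 | a IH]; intros k P; simpl.
  - destruct (Nat.eqb n k); simpl; now rewrite ?app_assoc.
  - rewrite <- !app_assoc, IH1, IH2. simpl. now rewrite <- ?app_assoc.
  - rewrite <- app_assoc, IH. simpl. now rewrite <- ?app_assoc.
Qed.

Corollary psubst_gamma s k u : psubst (gamma s) k (gamma u) = gamma (subst s k u).
Proof.
  pose proof (psubst_gamma_app s k u []) as E.
  now rewrite !app_nil_r in E.
Qed.

Lemma phi_aux_gamma_app s k Q P :
  phi_aux k Q (gamma s ++ P) = phi_aux k (Q ++ gamma s) P.
Proof.
  revert k Q P; induction s as [n | s1 IH1 s2 IH2 | a IH]; intros k Q P; simpl.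
  - reflexivity.
  - rewrite <- !app_assoc, IH1, IH2. simpl. now rewrite <- ?app_assoc.
  - rewrite <- app_assoc, IH. simpl. now rewrite <- ?app_assoc.
Qed.

Lemma phi_gamma_ret s P : phi (gamma s ++ cret :: P) = Some (gamma s, P).
Proof. unfold phi. now rewrite phi_aux_gamma_app. Qed.

Lemma mstep_value a P T V :
  mstep (tc (gamma (tlam a) ++ P) T, V) (tc P T, gamma a :: V).
Proof.
  simpl. rewrite <- app_assoc.
  apply mstep_lam, phi_gamma_ret.
Qed.

Lemma mstep_beta a b P T V :
  mstep ((capp :: P) :: T, gamma b :: gamma a :: V)
        (tc (gamma (subst a 0 (tlam b)) ++ []) (tc P T), V).
Proof.
  rewrite tc_gamma_app, app_nil_r, <- psubst_gamma.
  apply mstep_app.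
Qed.

Lemma eval_mstep k s u : eval k s u ->
  forall P T V, pow mstep (3 * k + 1) (tc (gamma s ++ P) T, V) (tc P T, gamma u :: V).
Proof.
  induction 1 as [a | k1 k2 k3 s1 s2 a b u _ IH1 _ IH2 _ IH3]; intros P T V.
  - apply pow_one, mstep_value.
  - replace (3 * (k1 + k2 + S k3) + 1)
      with ((3 * k1 + 1) + ((3 * k2 + 1) + (1 + (3 * k3 + 1)))) by lia.
    simpl gamma; rewrite <- !app_assoc.
    eapply pow_add; [apply IH1 |].
    eapply pow_add; [apply IH2 |].
    eapply pow_add; [apply pow_one, mstep_beta | apply (IH3 [] (tc P T))].
Qed.

Theorem theorem14 : forall (s t : term) (k : nat),
  pow red k s t -> (exists u, t = tlam u) ->
  exists P, pow mstep (3 * k + 1) (tau s) ([], [P]) /\ represents P t.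
Proof.
  intros s t k Hred [u ->].
  exists (gamma u); split; [| now exists u].
  pose proof (eval_mstep k s u (pow_red_lam_eval k s u Hred) [] [] []) as Hrun.
  now rewrite tc_gamma_app, app_nil_r in Hrun.
Qed.
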